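(* Let $E$ be a finite set and let $f:\{0,1\}^E\to[0,1]$ be an increasing function. For any monotonic measure $\mu$ on $\{0,1\}^E$ and any decision tree $T$, $$\mathrm{Var}_\mu(f)\;\le\;\sum_{e\in E}\delta_e(f,T)\,\mathrm{Cov}_\mu(f,\omega_e),$$ where $\delta_e(f,T):=\mu\big[\exists\, t\le\tau(\omega):\ e_t=e\big]$ is the revealment of $f$ for $T$.
   Context: $\{0,1\}^E$ carries the coordinatewise partial order; $f$ is increasing if $\omega\le\omega'$ implies $f(\omega)\le f(\omega')$. A probability measure $\mu$ on $\{0,1\}^E$ is monotonic if for every $e\in E$, every $F\subset E$, and every $\xi,\zeta\in\{0,1\}^F$ with $\xi\le\zeta$, $\mu[\omega_{e'}=\xi_{e'}\ \forall e'\in F]>0$ and $\mu[\omega_{e'}=\zeta_{e'}\ \forall e'\in F]>0$, one has $\mu[\omega_e=1\mid \omega_{e'}=\xi_{e'}\ \forall e'\in F]\le\mu[\omega_e=1\mid \omega_{e'}=\zeta_{e'}\ \forall e'\in F]$. Let $n=|E|$. For an $n$-tuple $e=(e_1,\dots,e_n)$ write $e_{[t]}=(e_1,\dots,e_t)$ and $\omega_{e_{[t]}}=(\omega_{e_1},\dots,\omega_{e_t})$. A decision tree is a pair $T=(e_1,(\phi_t)_{2\le t\le n})$ where $e_1\in E$ and each $\phi_t$ maps a pair $((e_1,\dots,e_{t-1}),\omega_{(e_1,\dots,e_{t-1})})$ (distinct elements of $E$ and their values) to an element of $E\setminus\{e_1,\dots,e_{t-1}\}$. Given $\omega\in\{0,1\}^E$,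 running $T$ on $\omega$ produces the ordering $(e_1,\dots,e_n)$ of $E$ defined inductively by $e_t=\phi_t((e_1,\dots,e_{t-1}),\omega_{(e_1,\dots,e_{t-1})})$ for $t\ge2$. Set $\tau(\omega)=\tau_{f,T}(\omega):=\min\{t\ge1:\ \forall\omega'\in\{0,1\}^E,\ \omega'_{e_{[t]}}=\omega_{e_{[t]}}\Rightarrow f(\omega')=f(\omega)\}$. *)

From HB Require Import structures.
From mathcomp Require Import all_boot all_order all_algebra.
Set Implicit Arguments. Unset Strict Implicit. Unset Printing Implicit Defensive.
Import Order.TTheory GRing.Theory Num.Theory.
Local Open Scope ring_scope.

Definition conf (E : finType) := {ffun E -> bool}.

Section Defs.
Variables (R : realFieldType) (E : finType).

Definition is_prob (mu : conf E -> R) :=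
  (forall w, 0 <= mu w) /\ \sum_(w : conf E) mu w = 1.

Definition prob (mu : conf E -> R) (A : pred (conf E)) : R :=
  \sum_(w : conf E | A w) mu w.

Definition expect (mu : conf E -> R) (g : conf E -> R) : R :=
  \sum_(w : conf E) mu w * g w.

Definition variance (mu : conf E -> R) (g : conf E -> R) : R :=
  expect mu (fun w => g w ^+ 2) - expect mu g ^+ 2.

Definition covariance (mu : conf E -> R) (g h : conf E -> R) : R :=
  expect mu (fun w => g w * h w) - expect mu g * expect mu h.

Definition wcoord (e : E) (w : conf E) : R := (w e : nat)%:R.

Definition increasing (f : conf E -> R) :=
  forall w w' : conf E, (forall e, w e <= w' e)%N -> f w <= f w'.

Definition cyl (F : {set E}) (xi : conf E) : pred (conf E) :=
  [pred w : conf E | [forall x in F, w x == xi x]].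

(* monotonic measure; xi, zeta in {0,1}^F are represented by configurations
   on E whose values outside F are irrelevant *)
Definition monotonic (mu : conf E -> R) :=
  forall (e : E) (F : {set E}) (xi zeta : conf E),
    (forall x, x \in F -> (xi x <= zeta x)%N) ->
    0 < prob mu (cyl F xi) -> 0 < prob mu (cyl F zeta) ->
    prob mu [pred w : conf E | cyl F xi w && w e] / prob mu (cyl F xi)
      <= prob mu [pred w : conf E | cyl F zeta w && w e] / prob mu (cyl F zeta).

(* Decision tree T = (e1, (phi_t)_{t>=2}); since t is determined by the length
   of the history, the family phi_t is given by one function phi on histories
   ((e_1,...,e_{t-1}), omega_{(e_1,...,e_{t-1})}) encoded as a list of pairs. *)
Definition dtree_valid (e1 : E) (phi : seq (E * bool) -> E) :=
  forall h : seq (E * bool), uniq (map fst h) -> (0 < size h < #|E|)%N ->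
    phi h \notin map fst h.

Fixpoint dt_run (e1 : E) (phi : seq (E * bool) -> E) (w : conf E) (t : nat)
  : seq E :=
  match t with
  | 0 => [::]
  | t'.+1 =>
      let p := dt_run e1 phi w t' in
      rcons p (if t' is 0 then e1 else phi [seq (x, w x) | x <- p])
  end.

Definition determined (f : conf E -> R) e1 phi (w : conf E) (t : nat) : bool :=
  [forall w' : conf E,
     all (fun x => w' x == w x) (dt_run e1 phi w t) ==> (f w' == f w)].

(* tau(omega) = min { t >= 1 : f determined by omega_{e_[t]} } (t ranges over
   1..|E|, where it always exists for a valid tree) *)
Definition tau (f : conf E -> R) e1 phi (w : conf E) : nat :=
  (find (fun t => determined f e1 phi w t.+1) (iota 0 #|E|)).+1.

Definition revealment (mu : conf E -> R) (f : conf E -> R) e1 phi (e : E) : R :=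
  prob mu [pred w : conf E | e \in dt_run e1 phi w (tau f e1 phi w)].

End Defs.

From Pilot Require Import Defs.
From HB Require Import structures.
From mathcomp Require Import all_boot all_order all_algebra.
From mathcomp Require Import ring lra.
Set Implicit Arguments. Unset Strict Implicit. Unset Printing Implicit Defensive.
Import Order.TTheory GRing.Theory Num.Theory.
Local Open Scope ring_scope.

(** Coupling proof of the OSSS inequality for monotonic measures.  Let [X] and
   [Y] be independent samples of [mu].  For [0 <= t <= tau X], keep the values
   of [X] and of [Y] on the first [t] coordinates revealed by the tree on [X],
   and reveal the remaining coordinates of both simultaneously, in the order
   chosen by the tree on the first sample, each new pair of bits being drawn
   from the monotone coupling of their conditional laws given what has been
   revealed so far.  The expected value of [|f X' - f Y'|] vanishes at [t = 0]
   (equal histories are coupled perfectly) and equals [E |f X - f Y|] at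
   [t = tau X], since [f X] is then determined.  Passing from [t] to [t + 1]
   replaces one coupled step by an independent one; since [mu] is monotonic
   and [f] increasing, the coupled distance is Lipschitz in the history of
   [Y] with constant the increase of the conditional mean of [f], so the cost
   is at most twice the conditional covariance of [f] and the revealed
   coordinate.  Monotonicity again bounds conditional covariances by the
   unconditional ones, and [2 Var f <= E |f X - f Y|] because [0 <= f <= 1]. *)

Lemma leq_find_eq (T : Type) (x0 : T) (a1 a2 : pred T) (s : seq T) t :
  (forall i, (i < t)%N -> a1 (nth x0 s i) = a2 (nth x0 s i)) ->
  (t <= find a1 s)%N = (t <= find a2 s)%N.
Proof.
elim: s t => [|y s IH] [|t] a12 //=.
rewrite (a12 0%N) //; case: (a2 y) => //; rewrite !ltnS.
by apply: IH => i it; apply: (a12 i.+1).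
Qed.

(** * Bernoulli couplings *)

Definition bern (R : pzRingType) (p : R) (b : bool) : R := if b then p else 1 - p.

Section BernoulliCoupling.
Variable R : realFieldType.
Implicit Types (p r : R) (b c : bool).

(* For [r <= r'], a law of [(b, c, c')] with [c ==> c'] whose [(b, c)] and
   [(b, c')] marginals are the monotone couplings of Ber(p) with Ber(r) and
   with Ber(r'). *)
Definition coupling3 p r r' b c c' : R :=
  match b, c, c' with
  | true, true, true => Num.min p r
  | true, false, true => Num.min p r' - Num.min p r
  | true, false, false => p - Num.min p r'
  | false, true, true => r - Num.min p r
  | false, false, true => r' - r - (Num.min p r' - Num.min p r)
  | false, false, false => 1 - p - r' + Num.min p r'
  | _, true, false => 0
  end.

Definition coupling p r b c := coupling3 p r r b c c.

Lemma coupling3_ge0 p r r' b c c' : 0 <= p <= 1 -> 0 <= r -> r <= r' -> r' <= 1 ->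
  0 <= coupling3 p r r' b c c'.
Proof.
move=> /andP[p0 p1] r0 rr' r'1; rewrite /coupling3 !minEle.
by case: (leP p r); case: (leP p r'); case: b; case: c; case: c' => /=; lra.
Qed.

Lemma coupling_ge0 p r b c : 0 <= p <= 1 -> 0 <= r <= 1 -> 0 <= coupling p r b c.
Proof. by move=> p01 /andP[r0 r1]; apply: coupling3_ge0. Qed.

Lemma coupling_sum_l p r c : \sum_b coupling p r b c = bern r c.
Proof. by rewrite big_bool /coupling /coupling3 /bern; case: c => /=; ring. Qed.

Lemma coupling_le_bern p r b c : 0 <= p <= 1 -> 0 <= r <= 1 ->
  coupling p r b c <= bern r c.
Proof.
move=> p01 r01; rewrite -(coupling_sum_l p r c) big_bool.
by case: b; [rewrite lerDl | rewrite lerDr]; apply: coupling_ge0.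
Qed.

Lemma coupling_neq0_bern_gt0 p r b c : 0 <= p <= 1 -> 0 <= r <= 1 ->
  coupling p r b c != 0 -> 0 < bern r c.
Proof.
move=> p01 r01 bc0; apply: lt_le_trans (coupling_le_bern b c p01 r01).
by rewrite lt0r bc0 coupling_ge0.
Qed.

Lemma coupling_diag p b c : b != c -> coupling p p b c = 0.
Proof. by rewrite /coupling /coupling3 minEle lexx; case: b; case: c => //= _; ring. Qed.

Lemma coupling3_sum_r p r r' b c : \sum_c' coupling3 p r r' b c c' = coupling p r b c.
Proof. by rewrite big_bool /coupling /coupling3; case: b; case: c => /=; ring. Qed.

Lemma coupling3_sum_m p r r' b c' : \sum_c coupling3 p r r' b c c' = coupling p r' b c'.
Proof. by rewrite big_bool /coupling /coupling3; case: b; case: c' => /=; ring. Qed.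

Section Ordered.
Variables (p r r' : R).
Hypotheses (p01 : 0 <= p <= 1) (r0 : 0 <= r) (rr' : r <= r') (r'1 : r' <= 1).

Lemma coupling3_le_l b c c' : coupling3 p r r' b c c' <= coupling p r b c.
Proof.
rewrite -(coupling3_sum_r p r r' b c) big_bool.
by case: c'; [rewrite lerDl | rewrite lerDr]; apply: coupling3_ge0.
Qed.

Lemma coupling3_le_r b c c' : coupling3 p r r' b c c' <= coupling p r' b c'.
Proof.
rewrite -(coupling3_sum_m p r r' b c') big_bool.
by case: c; [rewrite lerDl | rewrite lerDr]; apply: coupling3_ge0.
Qed.

Lemma coupling3_neq0_le b c c' : coupling3 p r r' b c c' != 0 -> c ==> c'.
Proof. by case: b; case: c; case: c' => //=; rewrite eqxx. Qed.

Lemma coupling_lipschitz (A B : bool -> bool -> R) (D D' : bool -> R) :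
  (forall b c c', coupling3 p r r' b c c' != 0 -> `|A b c - B b c'| <= D' c' - D c) ->
  `|\sum_b \sum_c coupling p r b c * A b c - \sum_b \sum_c coupling p r' b c * B b c|
  <= (r' * D' true + (1 - r') * D' false) - (r * D true + (1 - r) * D false).
Proof.
move=> AB.
have -> : \sum_b \sum_c coupling p r b c * A b c - \sum_b \sum_c coupling p r' b c * B b c
    = \sum_b \sum_c \sum_c' coupling3 p r r' b c c' * (A b c - B b c').
  by rewrite !big_bool /coupling /coupling3 /=; ring.
have -> : (r' * D' true + (1 - r') * D' false) - (r * D true + (1 - r) * D false)
    = \sum_b \sum_c \sum_c' coupling3 p r r' b c c' * (D' c' - D c).
  by rewrite !big_bool /coupling3 /=; ring.
apply: le_trans (ler_norm_sum _ _ _) _; apply: ler_sum => b _.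
apply: le_trans (ler_norm_sum _ _ _) _; apply: ler_sum => c _.
apply: le_trans (ler_norm_sum _ _ _) _; apply: ler_sum => c' _.
have q0 := coupling3_ge0 b c c' p01 r0 rr' r'1.
rewrite normrM ger0_norm //.
have [->|q0'] := eqVneq (coupling3 p r r' b c c') 0; first by rewrite !mul0r.
exact/ler_wpM2l/AB.
Qed.

End Ordered.

Lemma min_sub_mul_itv p r : 0 <= p <= 1 -> 0 <= r <= 1 ->
  0 <= Num.min p r - p * r <= r * (1 - r).
Proof.
move=> /andP[p0 p1] /andP[r0 r1]; rewrite minEle.
by case: (leP p r) => ?; apply/andP; split; nra.
Qed.

(* The difference is [min p r - p r] times a second difference of [A]. *)
Lemma coupling_indep_le p r (A : bool -> bool -> R) (D1 D0 : R) :
  0 <= p <= 1 -> 0 <= r <= 1 ->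
  (0 < r < 1 -> forall b, `|A b true - A b false| <= D1 - D0) ->
  \sum_b \sum_c bern p b * bern r c * A b c - \sum_b \sum_c coupling p r b c * A b c
  <= 2 * (r * (1 - r) * (D1 - D0)).
Proof.
move=> p01 r01 AD.
have -> : \sum_b \sum_c bern p b * bern r c * A b c
           - \sum_b \sum_c coupling p r b c * A b c
    = (Num.min p r - p * r) * ((A true false - A true true) + (A false true - A false false)).
  by rewrite !big_bool /coupling /coupling3 /bern /=; ring.
have /andP[d0 d1] := min_sub_mul_itv p01 r01.
have [/AD AD'|r01'] := boolP (0 < r < 1).
  have D10 : 0 <= D1 - D0 := le_trans (normr_ge0 _) (AD' true).
  have := AD' true; have := AD' false; rewrite -(distrC (A true _)).
  move=> /(le_trans (ler_norm _)) h0 /(le_trans (ler_norm _)) h1.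
  by move: (Num.min p r - p * r) d0 d1 => d d0 d1; nra.
have r0 : r * (1 - r) = 0.
  by move: r01 r01' => /andP[r0 r1]; rewrite negb_and -!leNgt => /orP[] ?; nra.
have -> : Num.min p r - p * r = 0 by apply/eqP; rewrite eq_le d0 -r0 d1.
by rewrite r0 !mul0r mulr0.
Qed.

End BernoulliCoupling.

(** * Conditioning on a history *)

Section Conditioning.
Variables (R : realFieldType) (E : finType) (mu : conf E -> R).
Hypothesis mu_ge0 : forall w, 0 <= mu w.
Implicit Types (S : seq E) (x y w : conf E) (al : seq (E * bool)) (e s : E)
  (g : conf E -> R).

(* A history lists the revealed pairs (coordinate, value) in order of revelation. *)
Definition agree (al : seq (E * bool)) (w : conf E) : bool :=
  all (fun p => w p.1 == p.2) al.

Definition hist (S : seq E) (w : conf E) : seq (E * bool) := [seq (s, w s) | s <- S].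

Definition wsum al (g : conf E -> R) : R := \sum_(w | agree al w) mu w * g w.

Definition mass al : R := \sum_(w | agree al w) mu w.

(* On a null history [al], [cexp al g] and [cprob al e] are [0] (division by [0]). *)
Definition cexp al g := wsum al g / mass al.

Definition cprob al e := mass (rcons al (e, true)) / mass al.

Definition upd (w : conf E) (e : E) (b : bool) : conf E :=
  [ffun x => if x == e then b else w x].

Lemma agree_rcons al p w : agree (rcons al p) w = agree al w && (w p.1 == p.2).
Proof. by rewrite /agree all_rcons andbC. Qed.

Lemma agree_hist S y w : agree (hist S y) w = all (fun s => w s == y s) S.
Proof. by rewrite /agree all_map. Qed.

Lemma agree_hist_self S y : agree (hist S y) y.
Proof. by rewrite agree_hist; apply/allP. Qed.

Lemma agree_histP S y w : reflect {in S, w =1 y} (agree (hist S y) w).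
Proof. by rewrite agree_hist; apply: (iffP allP) => h s /h /eqP. Qed.

Lemma eq_in_hist S x y : {in S, x =1 y} -> hist S x = hist S y.
Proof. by move=> h; apply/eq_in_map => s /h ->. Qed.

Lemma hist_agree S y w : agree (hist S y) w -> hist S w = hist S y.
Proof. by move/agree_histP; apply: eq_in_hist. Qed.

Lemma hist_rcons_upd S x e b : e \notin S ->
  hist (rcons S e) (upd x e b) = rcons (hist S x) (e, b).
Proof.
move=> eS; rewrite /hist map_rcons ffunE eqxx; congr rcons; apply/eq_in_map.
by move=> s sS /=; rewrite ffunE; case: eqP => // es; rewrite -es sS in eS.
Qed.

Lemma upd_eq_in S x y e b : {in S, x =1 y} -> {in rcons S e, upd x e b =1 upd y e b}.
Proof.
move=> xy s; rewrite mem_rcons in_cons !ffunE.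
by case: eqP => //= _ /xy.
Qed.

Lemma upd_le_in S x y e b c : e \notin S -> {in S, forall s, x s ==> y s} ->
  b ==> c -> {in rcons S e, forall s, upd x e b s ==> upd y e c s}.
Proof.
move=> eS xy bc s; rewrite mem_rcons in_cons !ffunE.
by case: eqP => //= _ /xy.
Qed.

Lemma wsum_split al e g :
  wsum al g = wsum (rcons al (e, true)) g + wsum (rcons al (e, false)) g.
Proof.
rewrite /wsum (bigID (fun w : conf E => w e)) /=.
by congr (_ + _); apply: eq_bigl => w; rewrite agree_rcons /=; case: (w e);
  rewrite ?andbT ?andbF.
Qed.

Lemma mass_wsum al : mass al = wsum al (fun => 1).
Proof. by apply: eq_bigr => w _; rewrite mulr1. Qed.

Lemma mass_split al e :
  mass al = mass (rcons al (e, true)) + mass (rcons al (e, false)).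
Proof. by rewrite !mass_wsum; apply: wsum_split. Qed.

Lemma mass_rcons_swap al p q :
  mass (rcons (rcons al p) q) = mass (rcons (rcons al q) p).
Proof. by apply: eq_bigl => w; rewrite !agree_rcons andbAC. Qed.

Lemma wsum_rcons_swap al p q g :
  wsum (rcons (rcons al p) q) g = wsum (rcons (rcons al q) p) g.
Proof. by apply: eq_bigl => w; rewrite !agree_rcons andbAC. Qed.

Lemma mass_ge0 al : 0 <= mass al.
Proof. exact: sumr_ge0. Qed.

Lemma mass_rcons_le al p : mass (rcons al p) <= mass al.
Proof.
case: p => e b; rewrite [leRHS](mass_split al e).
by case: b; [rewrite lerDl | rewrite lerDr]; apply: mass_ge0.
Qed.

Lemma mu_le_mass al w : agree al w -> mu w <= mass al.
Proof. by move=> alw; rewrite /mass (bigD1 w) //= lerDl sumr_ge0. Qed.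

Lemma mass0_mu al w : mass al = 0 -> agree al w -> mu w = 0.
Proof. by move=> al0 alw; apply/eqP; rewrite eq_le mu_ge0 -al0 mu_le_mass. Qed.

Lemma mass0_wsum al g : mass al = 0 -> wsum al g = 0.
Proof. by move=> al0; rewrite /wsum big1 // => w /(mass0_mu al0) ->; rewrite mul0r. Qed.

Lemma mass_hist_gt0 S y : mu y != 0 -> 0 < mass (hist S y).
Proof.
by move=> y0; apply: lt_le_trans (mu_le_mass (agree_hist_self S y)); rewrite lt0r y0 mu_ge0.
Qed.

Lemma wsum_const al g v : (forall w, agree al w -> g w = v) -> wsum al g = mass al * v.
Proof. by move=> gv; rewrite /wsum big_distrl; apply: eq_bigr => w /gv ->. Qed.

Lemma cprob_itv al e : 0 <= cprob al e <= 1.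
Proof.
rewrite /cprob divr_ge0 ?mass_ge0 //=.
have [->|al0] := eqVneq (mass al) 0; first by rewrite invr0 mulr0.
by rewrite ler_pdivrMr ?mul1r ?mass_rcons_le // lt0r al0 mass_ge0.
Qed.

Lemma cprob_compl al e : mass al != 0 ->
  1 - cprob al e = mass (rcons al (e, false)) / mass al.
Proof.
move=> al0; rewrite /cprob -{1}(divff al0) -mulrBl (mass_split al e); congr (_ / _).
by rewrite addrC addKr.
Qed.

Lemma mass_rcons_cprob al e c :
  mass (rcons al (e, c)) = bern (cprob al e) c * mass al.
Proof.
have [al0|al0] := eqVneq (mass al) 0.
  by rewrite al0 mulr0; apply/eqP; rewrite eq_le mass_ge0 -al0 mass_rcons_le.
by case: c; rewrite /bern ?cprob_compl ?divfK.
Qed.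

Lemma mass_child_gt0 al e c : 0 < mass al ->
  0 < bern (cprob al e) c -> 0 < mass (rcons al (e, c)).
Proof. by move=> al0 c0; rewrite mass_rcons_cprob mulr_gt0. Qed.

Lemma cexp_split al e g : mass al != 0 ->
  cexp al g = cprob al e * cexp (rcons al (e, true)) g
            + (1 - cprob al e) * cexp (rcons al (e, false)) g.
Proof.
move=> al0; rewrite cprob_compl // /cprob /cexp (wsum_split al e) mulrDl.
have ratio c : mass (rcons al (e, c)) / mass al * (wsum (rcons al (e, c)) g
    / mass (rcons al (e, c))) = wsum (rcons al (e, c)) g / mass al.
  have [c0|c0] := eqVneq (mass (rcons al (e, c))) 0.
    by rewrite c0 mass0_wsum // !mul0r.
  by rewrite mulrAC mulrCA mulfV // mulr1.
by rewrite !ratio.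
Qed.

Lemma cexp_const al g v : (forall w, agree al w -> g w = v) -> mass al != 0 ->
  cexp al g = v.
Proof. by move=> gv al0; rewrite /cexp (wsum_const gv) mulrAC divff ?mul1r. Qed.

Lemma cexp_split_const al e g v1 v0 : mass al != 0 ->
  (forall w, agree (rcons al (e, true)) w -> g w = v1) ->
  (forall w, agree (rcons al (e, false)) w -> g w = v0) ->
  cexp al g = cprob al e * v1 + (1 - cprob al e) * v0.
Proof.
move=> al0 g1 g0; rewrite (cexp_split e g al0).
have [m1|m1] := eqVneq (mass (rcons al (e, true))) 0.
  have m0 : mass (rcons al (e, false)) != 0 by move: al0; rewrite (mass_split al e) m1 add0r.
  by rewrite /cprob m1 !mul0r subr0 !mul1r !add0r (cexp_const g0).
have [m0|m0] := eqVneq (mass (rcons al (e, false))) 0.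
  by rewrite cprob_compl // m0 !mul0r !addr0 (cexp_const g1).
by rewrite (cexp_const g1) ?(cexp_const g0).
Qed.

(* Tower property for the partition into the cylinders [agree (C x)]. *)
Lemma expect_tower (C : conf E -> seq (E * bool)) g :
  (forall x x', agree (C x) x' -> C x' = C x) -> (forall x, agree (C x) x) ->
  \sum_x mu x * g x = \sum_x mu x * cexp (C x) g.
Proof.
move=> Cclass Cself.
transitivity (\sum_x \sum_w
    (if agree (C x) w then mu x * (mu w * g w) / mass (C x) else 0)).
  symmetry; rewrite exchange_big /=; apply: eq_bigr => w _; rewrite -big_mkcond /=.
  transitivity (\sum_(x | agree (C w) x) mu x * (mu w * g w) / mass (C w)).
    apply: eq_big => [x|x /Cclass -> //].
    by apply/idP/idP => h; rewrite (Cclass _ _ h) Cself.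
  rewrite -!big_distrl /= -/(mass (C w)).
  have [m0|m0] := eqVneq (mass (C w)) 0.
    by rewrite (mass0_mu m0 (Cself w)) !mul0r mulr0 mul0r.
  by rewrite mulrAC divff // mul1r.
apply: eq_bigr => x _; rewrite -big_mkcond /= /cexp /wsum mulrA big_distrr big_distrl.
by apply: eq_bigr.
Qed.

Lemma expect_tower_hist S g : \sum_x mu x * g x = \sum_x mu x * cexp (hist S x) g.
Proof. by apply: expect_tower => [x x' /hist_agree|x] //; apply: agree_hist_self. Qed.

End Conditioning.

(** * Conditional covariances *)

(* Law of total covariance for a two-by-two table of masses [a b c] and weighted
   sums [u b c]: the between-groups term factors as a product of the difference
   of the group means and of the difference of the group frequencies. *)
Lemma mixture_cov_le (R : realFieldType) (a u : bool -> bool -> R) :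
  (forall b c, 0 <= a b c) ->
  (forall b, a b true + a b false = 0 -> u b true = 0 /\ u b false = 0) ->
  let m b := a b true + a b false in
  let M := m true + m false in
  0 < M ->
  (0 < m true -> 0 < m false ->
     (u false true + u false false) / m false <= (u true true + u true false) / m true) ->
  (0 < m true -> 0 < m false -> a false true / m false <= a true true / m true) ->
  m true / M * ((a true false * u true true - a true true * u true false) / m true ^+ 2)
  + m false / M * ((a false false * u false true - a false true * u false false) / m false ^+ 2)
  <= ((a true false + a false false) * (u true true + u false true)
      - (a true true + a false true) * (u true false + u false false)) / M ^+ 2.
Proof.
move=> a0 au0 m M M0 um am.
have m0 b : 0 <= m b by rewrite addr_ge0.
have [m1|m1] := eqVneq (m true) 0.
  have [a1 a0'] : a true true = 0 /\ a true false = 0.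
    by move: m1 (a0 true true) (a0 true false); rewrite /m; split; lra.
  case: (au0 _ m1) => -> ->; rewrite /M m1 add0r in M0 *.
  by rewrite a1 a0' !(mul0r, mulr0, subr0, add0r, addr0) divff ?mul1r ?gt_eqF.
have [m2|m2] := eqVneq (m false) 0.
  have [a1 a0'] : a false true = 0 /\ a false false = 0.
    by move: m2 (a0 false true) (a0 false false); rewrite /m; split; lra.
  case: (au0 _ m2) => -> ->; rewrite /M m2 addr0 in M0 *.
  by rewrite a1 a0' !(mul0r, mulr0, subr0, add0r, addr0) divff ?mul1r ?gt_eqF.
have p1 : 0 < m true by rewrite lt0r m1 m0.
have p2 : 0 < m false by rewrite lt0r m2 m0.
rewrite -subr_ge0.
have -> : ((a true false + a false false) * (u true true + u false true)
      - (a true true + a false true) * (u true false + u false false)) / M ^+ 2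
    - (m true / M * ((a true false * u true true - a true true * u true false) / m true ^+ 2)
      + m false / M * ((a false false * u false true - a false true * u false false)
        / m false ^+ 2))
  = m true * m false / M ^+ 2
    * ((u true true + u true false) / m true - (u false true + u false false) / m false)
    * (a true true / m true - a false true / m false).
  by rewrite /M /m; field; rewrite -/(m true) -/(m false) -/M m1 m2 gt_eqF.
by rewrite !mulr_ge0 ?subr_ge0 ?invr_ge0 ?exprn_ge0 ?um ?am // ltW.
Qed.

Section ConditionalCovariance.
Variables (R : realFieldType) (E : finType) (mu : conf E -> R) (g : conf E -> R).
Hypothesis mu_ge0 : forall w, 0 <= mu w.
Implicit Types (al : seq (E * bool)) (e s : E).

Local Notation mass := (mass mu).
Local Notation wsum := (wsum mu).
Local Notation cprob := (cprob mu).
Local Notation cexp := (cexp mu).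

(* [Cov (g, w_e | al)], in the form [p (1 - p) (E[g | al, w_e] - E[g | al, ~~ w_e])]. *)
Definition cond_cov al e :=
  cprob al e * (1 - cprob al e) * (cexp (rcons al (e, true)) g - cexp (rcons al (e, false)) g).

Lemma cond_covE al e : cond_cov al e =
  (mass (rcons al (e, false)) * wsum (rcons al (e, true)) g
   - mass (rcons al (e, true)) * wsum (rcons al (e, false)) g) / mass al ^+ 2.
Proof.
have [al0|al0] := eqVneq (mass al) 0.
  by rewrite /cond_cov /cprob al0 invr0 !mulr0 !mul0r expr0n /= invr0 mulr0.
rewrite /cond_cov cprob_compl // /cprob /cexp.
have [m1|m1] := eqVneq (mass (rcons al (e, true))) 0.
  by rewrite m1 (mass0_wsum mu_ge0 _ m1) !(mul0r, mulr0, subr0).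
have [m0|m0] := eqVneq (mass (rcons al (e, false))) 0.
  by rewrite m0 (mass0_wsum mu_ge0 _ m0) !(mul0r, mulr0, subr0, sub0r, oppr0).
by field; rewrite al0 m1 m0.
Qed.

Lemma cond_cov_rcons_le al s e : 0 < mass al ->
  (0 < mass (rcons al (s, true)) -> 0 < mass (rcons al (s, false)) ->
     cexp (rcons al (s, false)) g <= cexp (rcons al (s, true)) g) ->
  (0 < mass (rcons al (s, true)) -> 0 < mass (rcons al (s, false)) ->
     cprob (rcons al (s, false)) e <= cprob (rcons al (s, true)) e) ->
  cprob al s * cond_cov (rcons al (s, true)) e
    + (1 - cprob al s) * cond_cov (rcons al (s, false)) e
  <= cond_cov al e.
Proof.
move=> al0 gs es.
pose a b c := mass (rcons (rcons al (s, b)) (e, c)).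
pose u b c := wsum (rcons (rcons al (s, b)) (e, c)) g.
have mS b : mass (rcons al (s, b)) = a b true + a b false by apply: mass_split.
have wS b : wsum (rcons al (s, b)) g = u b true + u b false by apply: wsum_split.
have mE c : mass (rcons al (e, c)) = a true c + a false c.
  by rewrite (mass_split _ _ s); congr (_ + _); apply: mass_rcons_swap.
have wE c : wsum (rcons al (e, c)) g = u true c + u false c.
  by rewrite (wsum_split _ _ s); congr (_ + _); apply: wsum_rcons_swap.
have mA : mass al = a true true + a true false + (a false true + a false false).
  by rewrite (mass_split _ al s) !mS.
rewrite /cexp /cprob !mS !wS in gs es.
rewrite !cond_covE cprob_compl ?gt_eqF // /cprob !mS !mE !wE mA.
rewrite mA in al0; apply: mixture_cov_le => // [b c|b m0]; first exact: mass_ge0.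
have [a1 a0] : a b true = 0 /\ a b false = 0.
  by move: m0 (mass_ge0 mu_ge0 (rcons (rcons al (s, b)) (e, true)))
    (mass_ge0 mu_ge0 (rcons (rcons al (s, b)) (e, false))); rewrite /a; split; lra.
by rewrite /u !(mass0_wsum mu_ge0).
Qed.

Lemma expect_mulr_wcoord (h : conf E -> R) e :
  expect mu (fun w => h w * wcoord R e w) = wsum [:: (e, true)] h.
Proof.
rewrite /expect /wsum [RHS]big_mkcond /=; apply: eq_bigr => w _.
by rewrite /wcoord /agree /= andbT eqb_id; case: (w e); rewrite ?mulr1 ?mulr0.
Qed.

Lemma covariance_wcoord e : mass [::] = 1 -> covariance mu g (wcoord R e) = cond_cov [::] e.
Proof.
move=> mu1; rewrite cond_covE mu1 expr1n divr1 /covariance expect_mulr_wcoord.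
have -> : expect mu (wcoord R e) = mass [:: (e, true)].
  by rewrite mass_wsum -expect_mulr_wcoord; apply: eq_bigr => w _; rewrite mul1r.
have -> : expect mu g = wsum [::] g by [].
have m0 : mass [:: (e, false)] = 1 - mass [:: (e, true)].
  by rewrite -mu1 (mass_split _ [::] e) addrAC subrr add0r.
by rewrite (wsum_split _ [::] e) m0 /=; ring.
Qed.

End ConditionalCovariance.

Lemma variance_le_abs_dist (R : realFieldType) (E : finType) (mu g : conf E -> R) :
  (forall w, 0 <= mu w) -> \sum_w mu w = 1 -> (forall w, 0 <= g w <= 1) ->
  2 * variance mu g <= \sum_x mu x * \sum_y mu y * `|g x - g y|.
Proof.
move=> mu_ge0 mu1 g01; set A := expect mu g; set B := expect mu (fun w => g w ^+ 2).
have sq x : \sum_y mu y * (g x - g y) ^+ 2 = g x ^+ 2 - 2 * g x * A + B.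
  transitivity (\sum_y (g x ^+ 2 * mu y - (2 * g x) * (mu y * g y) + mu y * g y ^+ 2)).
    by apply: eq_bigr => y _; ring.
  by rewrite big_split sumrB /= -!mulr_sumr mu1 mulr1.
have -> : 2 * variance mu g = \sum_x mu x * \sum_y mu y * (g x - g y) ^+ 2.
  transitivity (\sum_x (mu x * g x ^+ 2 - (2 * A) * (mu x * g x) + B * mu x)).
    rewrite big_split sumrB /= -!mulr_sumr mu1 mulr1 /variance -/A -/B /B /A /expect.
    by ring.
  by apply: eq_bigr => x _; rewrite sq; ring.
apply: ler_sum => x _; apply: ler_wpM2l => //; apply: ler_sum => y _.
have d1 : `|g x - g y| <= 1.
  by move: (g01 x) (g01 y) => /andP[? ?] /andP[? ?]; rewrite ler_norml; apply/andP; split; lra.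
apply: ler_wpM2l => //; rewrite -(real_normK (num_real (g x - g y))) expr2.
by rewrite -[leRHS]mulr1 ler_wpM2l.
Qed.

(** * The coupled exploration *)

Section CoupledExploration.
Variables (R : realFieldType) (E : finType) (mu f : conf E -> R)
  (e1 : E) (phi : seq (E * bool) -> E).
Hypotheses (mu_ge0 : forall w, 0 <= mu w) (f01 : forall w, 0 <= f w <= 1)
  (f_incr : increasing f) (mu_mono : monotonic mu) (phi_valid : dtree_valid e1 phi)
  (mu_sum1 : \sum_w mu w = 1).
Implicit Types (S : seq E) (x y w : conf E) (al : seq (E * bool)) (e s : E).

Local Notation mass := (mass mu).
Local Notation cprob := (cprob mu).
Local Notation cexp := (cexp mu).

Definition next_edge al : E := if al is [::] then e1 else phi al.

Definition explored S d := uniq S && (size S + d == #|E|)%N.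

(* Expected value of [|f X - f Y|] when the hidden coordinates of [X] (given the
   history of [x] on [S]) and of [Y] (given the history of [y] on [S]) are
   revealed one by one, in the order chosen by the tree on [X], each pair of
   new bits being drawn from the monotone coupling of their conditional laws. *)
Fixpoint coupled_dist d S x y : R :=
  if d is d'.+1 then
    let e := next_edge (hist S x) in
    \sum_b \sum_c coupling (cprob (hist S x) e) (cprob (hist S y) e) b c
      * coupled_dist d' (rcons S e) (upd x e b) (upd y e c)
  else `|f x - f y|.

Lemma cprob_itv_hist S x e : 0 <= cprob (hist S x) e <= 1.
Proof. exact: cprob_itv. Qed.

Lemma next_edge_notin S x d : explored S d.+1 -> next_edge (hist S x) \notin S.
Proof.
case/andP=> uS /eqP sS; case: S uS sS => [|s S] //= uS sS.
have := @phi_valid (hist (s :: S) x); rewrite /hist -map_comp map_id; apply=> //.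
by rewrite size_map -sS /= addnS ltnS leq_addr.
Qed.

Lemma explored_rcons S d x :
  explored S d.+1 -> explored (rcons S (next_edge (hist S x))) d.
Proof.
move=> Sd; have eS := next_edge_notin x Sd; case/andP: Sd => uS /eqP sS.
by rewrite /explored rcons_uniq eS uS size_rcons addSn -addnS sS /=.
Qed.

Lemma explored0_mem S : explored S 0 -> forall s, s \in S.
Proof.
case/andP=> uS /eqP; rewrite addn0 => sS s.
have cS : #|S| = #|predT : {pred E}| by rewrite (card_uniqP uS) sS.
by rewrite (subset_cardP cS (subset_predT _)).
Qed.

Lemma cexp_hist_full S y g : (forall s, s \in S) ->
  0 < mass (hist S y) -> cexp (hist S y) g = g y.
Proof.
move=> Sfull y0; apply: (cexp_const _ (lt0r_neq0 y0)) => w /agree_histP wy.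
by congr g; apply/ffunP => s; apply: wy.
Qed.

Lemma coupled_dist_eq_in d S x x' y y' : explored S d ->
  {in S, x =1 x'} -> {in S, y =1 y'} -> coupled_dist d S x y = coupled_dist d S x' y'.
Proof.
elim: d S x x' y y' => [|d IH] S x x' y y' Sd xx' yy' /=.
  have Sfull := explored0_mem Sd.
  have -> : x = x' by apply/ffunP => s; apply: xx'.
  by have -> : y = y' by apply/ffunP => s; apply: yy'.
have Sd' := explored_rcons x Sd.
rewrite (eq_in_hist xx') (eq_in_hist yy') in Sd' *.
apply: eq_bigr => b _; apply: eq_bigr => c _.
by congr (_ * _); apply: IH; rewrite // -(eq_in_hist xx'); apply: upd_eq_in.
Qed.

Lemma coupled_dist_diag d S x y : explored S d -> {in S, x =1 y} -> coupled_dist d S x y = 0.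
Proof.
elim: d S x y => [|d IH] S x y Sd xy /=.
  have -> : x = y by apply/ffunP => s; apply/xy/explored0_mem.
  by rewrite subrr normr0.
have Sd' := explored_rcons x Sd; rewrite (eq_in_hist xy) in Sd' *.
apply: big1 => b _; apply: big1 => c _.
have [<-|bc] := eqVneq b c; last by rewrite coupling_diag // mul0r.
by rewrite IH ?mulr0 //; apply: upd_eq_in.
Qed.

Lemma coupled_dist_determined d S x y v : explored S d -> 0 < mass (hist S y) ->
  (forall w, agree (hist S x) w -> f w = v) ->
  coupled_dist d S x y = cexp (hist S y) (fun w => `|v - f w|).
Proof.
elim: d S x y => [|d IH] S x y Sd y0 xv /=.
  by rewrite cexp_hist_full ?(xv x (agree_hist_self _ _)) //; apply: explored0_mem.
set e := next_edge (hist S x); have eS : e \notin S := next_edge_notin x Sd.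
set p := cprob (hist S x) e; set r := cprob (hist S y) e.
transitivity (\sum_b \sum_c coupling p r b c
              * cexp (rcons (hist S y) (e, c)) (fun w => `|v - f w|)).
  apply: eq_bigr => b _; apply: eq_bigr => c _.
  have [->|bc] := eqVneq (coupling p r b c) 0; first by rewrite !mul0r.
  rewrite IH -?hist_rcons_upd //; first exact: explored_rcons.
    rewrite hist_rcons_upd //; apply: (mass_child_gt0 mu_ge0) y0 _.
    exact: coupling_neq0_bern_gt0 (cprob_itv_hist _ _ _) (cprob_itv_hist _ _ _) bc.
  by move=> w; rewrite hist_rcons_upd // agree_rcons => /andP[/xv].
rewrite exchange_big /=.
under eq_bigr => c _ do rewrite -big_distrl /= coupling_sum_l.
by rewrite big_bool /= -(cexp_split _ _ _ (lt0r_neq0 y0)).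
Qed.

Lemma cprob_hist_le S y y' e : {in S, forall s, y s ==> y' s} ->
  0 < mass (hist S y) -> 0 < mass (hist S y') ->
  cprob (hist S y) e <= cprob (hist S y') e.
Proof.
move=> yy' y0 y'0.
have cylE z w : cyl [set s in S] z w = agree (hist S z) w.
  rewrite /cyl /= agree_hist; apply/forall_inP/allP => h s sS; apply: h;
  by rewrite inE in sS *.
have probE z : prob mu (cyl [set s in S] z) = mass (hist S z).
  by apply: eq_bigl => w; rewrite cylE.
have probeE z : prob mu [pred w | cyl [set s in S] z w && w e]
    = mass (rcons (hist S z) (e, true)).
  by apply: eq_bigl => w; rewrite /= cylE agree_rcons /= eqb_id.
have := @mu_mono e [set s in S] y y'; rewrite /cprob !probE !probeE; apply=> // s.
by rewrite inE => /yy'; case: (y s); case: (y' s).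
Qed.

(* This is where the monotonicity of [mu] and of [f] enters. *)
Lemma coupled_dist_lipschitz d S x y y' : explored S d ->
  {in S, forall s, y s ==> y' s} -> 0 < mass (hist S y) -> 0 < mass (hist S y') ->
  `|coupled_dist d S x y - coupled_dist d S x y'| <= cexp (hist S y') f - cexp (hist S y) f.
Proof.
elim: d S x y y' => [|d IH] S x y y' Sd yy' y0 y'0 /=.
  have Sfull := explored0_mem Sd; rewrite !cexp_hist_full //.
  have fyy' : f y <= f y'.
    by apply: f_incr => s; move: (yy' s (Sfull s)); case: (y s); case: (y' s).
  apply: le_trans (ler_dist_dist _ _) _.
  have -> : f x - f y - (f x - f y') = f y' - f y by ring.
  by rewrite ger0_norm // subr_ge0.
set e := next_edge (hist S x); have eS : e \notin S := next_edge_notin x Sd.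
set p := cprob (hist S x) e; set r := cprob (hist S y) e; set r' := cprob (hist S y') e.
have rr' : r <= r' by apply: cprob_hist_le.
have /andP[r0 _] := cprob_itv_hist S y e; have /andP[_ r'1] := cprob_itv_hist S y' e.
have p01 := cprob_itv_hist S x e.
have := coupling_lipschitz p01 r0 rr' r'1
   (A := fun b c => coupled_dist d (rcons S e) (upd x e b) (upd y e c))
   (B := fun b c => coupled_dist d (rcons S e) (upd x e b) (upd y' e c))
   (D := fun c => cexp (rcons (hist S y) (e, c)) f)
   (D' := fun c => cexp (rcons (hist S y') (e, c)) f).
rewrite -!cexp_split ?lt0r_neq0 //; apply=> b c c' bcc'.
have q0 : 0 < coupling3 p r r' b c c' by rewrite lt0r bcc' coupling3_ge0.
have bc : coupling p r b c != 0.
  by rewrite lt0r_neq0 // (lt_le_trans q0) ?coupling3_le_l.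
have bc' : coupling p r' b c' != 0.
  by rewrite lt0r_neq0 // (lt_le_trans q0) ?coupling3_le_r.
rewrite -!hist_rcons_upd //; apply: IH; first exact: explored_rcons.
- exact: upd_le_in (coupling3_neq0_le bcc').
- rewrite hist_rcons_upd //; apply: (mass_child_gt0 mu_ge0) y0 _.
  exact: coupling_neq0_bern_gt0 p01 (cprob_itv_hist _ _ _) bc.
- rewrite hist_rcons_upd //; apply: (mass_child_gt0 mu_ge0) y'0 _.
  exact: coupling_neq0_bern_gt0 p01 (cprob_itv_hist _ _ _) bc'.
Qed.

Definition avg_dist d S x := \sum_y mu y * coupled_dist d S x y.

Definition avg_cond_cov S e := \sum_y mu y * cond_cov mu f (hist S y) e.

Lemma avg_dist_eq_in d S x x' : explored S d -> {in S, x =1 x'} ->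
  avg_dist d S x = avg_dist d S x'.
Proof. by move=> Sd xx'; apply: eq_bigr => y _; rewrite (coupled_dist_eq_in Sd xx' (y' := y)). Qed.

Lemma avg_dist_rcons d S e x : e \notin S -> explored (rcons S e) d ->
  avg_dist d (rcons S e) x = \sum_y mu y *
    (cprob (hist S y) e * coupled_dist d (rcons S e) x (upd y e true)
     + (1 - cprob (hist S y) e) * coupled_dist d (rcons S e) x (upd y e false)).
Proof.
move=> eS Sd; rewrite /avg_dist (expect_tower_hist mu_ge0 S); apply: eq_bigr => y _.
have [->|y0] := eqVneq (mu y) 0; first by rewrite !mul0r.
congr (_ * _); apply: (cexp_split_const mu_ge0).
- exact: lt0r_neq0 (mass_hist_gt0 mu_ge0 S y0).
all: by move=> w; rewrite -hist_rcons_upd // => /agree_histP wy; apply: coupled_dist_eq_in.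
Qed.

(* One step of the exploration with independent rather than coupled new bits. *)
Lemma coupled_dist_indep_le d S x y (e := next_edge (hist S x))
    (A := fun b c => coupled_dist d (rcons S e) (upd x e b) (upd y e c)) :
  explored S d.+1 -> mu y != 0 ->
  \sum_b \sum_c bern (cprob (hist S x) e) b * bern (cprob (hist S y) e) c * A b c
  <= coupled_dist d.+1 S x y + 2 * cond_cov mu f (hist S y) e.
Proof.
move=> Sd y0; have eS : e \notin S := next_edge_notin x Sd.
have y0' := mass_hist_gt0 mu_ge0 S y0.
rewrite addrC -lerBlDr; apply: coupling_indep_le => [||/andP[r0 r1] b];
  try exact: cprob_itv_hist.
rewrite /A distrC -!(hist_rcons_upd y _ eS).
apply: coupled_dist_lipschitz; first exact: explored_rcons.
- by apply: upd_le_in => // s _; rewrite implybb.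
- by rewrite hist_rcons_upd //; apply: (mass_child_gt0 mu_ge0); rewrite /bern ?subr_gt0.
- by rewrite hist_rcons_upd //; apply: (mass_child_gt0 mu_ge0).
Qed.

Lemma avg_dist_step_le d S x (e := next_edge (hist S x)) : explored S d.+1 ->
  cprob (hist S x) e * avg_dist d (rcons S e) (upd x e true)
  + (1 - cprob (hist S x) e) * avg_dist d (rcons S e) (upd x e false)
  <= avg_dist d.+1 S x + 2 * avg_cond_cov S e.
Proof.
move=> Sd; have eS : e \notin S := next_edge_notin x Sd.
rewrite !avg_dist_rcons ?explored_rcons // /avg_cond_cov /avg_dist !mulr_sumr -!big_split.
apply: ler_sum => y _.
have [->|y0] := eqVneq (mu y) 0; first by rewrite !(mul0r, mulr0, addr0).
rewrite [leRHS](_ : _ = mu y * (coupled_dist d.+1 S x y + 2 * cond_cov mu f (hist S y) e));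
  last by rewrite mulrDr [in RHS]mulrCA.
move: (coupled_dist_indep_le x Sd y0) => /(ler_wpM2l (mu_ge0 y)); apply: le_trans.
by rewrite !big_bool /bern /= le_eqVlt; apply/orP; left; apply/eqP; ring.
Qed.

Lemma avg_cond_cov_rcons_le S s e : uniq (rcons S s) ->
  avg_cond_cov (rcons S s) e <= avg_cond_cov S e.
Proof.
move=> uSs; have sS : s \notin S by move: uSs; rewrite rcons_uniq => /andP[].
have Sd : explored (rcons S s) (#|E| - size (rcons S s)).
  by rewrite /explored uSs /= subnKC // -(card_uniqP uSs) max_card.
rewrite /avg_cond_cov (expect_tower_hist mu_ge0 S); apply: ler_sum => y _.
have [->|y0] := eqVneq (mu y) 0; first by rewrite !mul0r.
have y0' := mass_hist_gt0 mu_ge0 S y0.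
apply: ler_wpM2l => //.
have condE b w : agree (rcons (hist S y) (s, b)) w ->
    cond_cov mu f (hist (rcons S s) w) e = cond_cov mu f (rcons (hist S y) (s, b)) e.
  rewrite agree_rcons => /andP[/hist_agree wy /eqP ws].
  by rewrite /hist map_rcons -/(hist S w) wy /= ws.
rewrite (cexp_split_const mu_ge0 (lt0r_neq0 y0') (condE true) (condE false)).
have yle : {in rcons S s, forall t, upd y s false t ==> upd y s true t}.
  by apply: upd_le_in => // t _; rewrite implybb.
apply: cond_cov_rcons_le => // m1 m0.
  have := coupled_dist_lipschitz y Sd yle; rewrite !hist_rcons_upd // => /(_ m0 m1).
  by move=> /(le_trans (normr_ge0 _)); rewrite subr_ge0.
by have := cprob_hist_le e yle; rewrite !hist_rcons_upd //; apply.
Qed.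

Lemma avg_cond_cov_le_covariance S e : uniq S -> e \notin S ->
  avg_cond_cov S e <= covariance mu f (wcoord R e).
Proof.
elim/last_ind: S => [|S s IH] uS eS.
  rewrite (covariance_wcoord f mu_ge0 e mu_sum1) /avg_cond_cov.
  by rewrite (eq_bigr (fun y => mu y * cond_cov mu f [::] e)) // -big_distrl /= mu_sum1 mul1r.
have [uS' eS'] : uniq S /\ e \notin S.
  by move: uS eS; rewrite rcons_uniq mem_rcons in_cons negb_or => /andP[_ ?] /andP[_ ?].
exact: le_trans (avg_cond_cov_rcons_le e uS) (IH uS' eS').
Qed.

(** * Runs of the decision tree *)

Local Notation n := #|E|.
Local Notation run x t := (dt_run e1 phi x t).
Local Notation tau x := (tau f e1 phi x).

Lemma next_edge_rcons al p : next_edge (rcons al p) = phi (rcons al p).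
Proof. by case: al. Qed.

Lemma dt_runS x t : run x t.+1 = rcons (run x t) (next_edge (hist (run x t) x)).
Proof.
case: t => [//|t]; rewrite [LHS]/= -/(dt_run e1 phi x t.+1).
by rewrite [dt_run e1 phi x t.+1]/= /hist map_rcons next_edge_rcons.
Qed.

Lemma explored_run x t : (t <= n)%N -> explored (run x t) (n - t).
Proof.
elim: t => [_|t IH tn]; first by rewrite /explored /= subn0.
by rewrite dt_runS; apply: explored_rcons; rewrite subnSK // IH // ltnW.
Qed.

Lemma run_agree x x' t : agree (hist (run x t) x) x' -> run x' t = run x t.
Proof.
elim: t => [//|t IH]; rewrite dt_runS /hist map_rcons agree_rcons -/(hist _ x).
by case/andP=> /[dup] xx' /IH; rewrite dt_runS => ->; rewrite (hist_agree xx').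
Qed.

Lemma run_prefix x m t : (m <= t)%N -> {subset run x m <= run x t}.
Proof.
elim: t => [|t IH]; first by rewrite leqn0 => /eqP ->.
rewrite leq_eqVlt => /orP[/eqP -> //|mt] e /(IH mt) es.
by rewrite dt_runS mem_rcons in_cons es orbT.
Qed.

Lemma determinedP x t : reflect (forall w, agree (hist (run x t) x) w -> f w = f x)
  (determined f e1 phi x t).
Proof.
apply: (iffP forallP) => [fx w xw|fx w]; last first.
  by apply/implyP; rewrite -agree_hist => /fx ->.
by apply/eqP; move: (fx w); rewrite -agree_hist xw.
Qed.

Lemma determined_run_full x : determined f e1 phi x n.
Proof.
apply/determinedP => w /agree_histP xw; congr f; apply/ffunP => s; apply: xw.
by apply: explored0_mem s; rewrite -(subnn n) explored_run.
Qed.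

Lemma has_determined x : has (fun t => determined f e1 phi x t.+1) (iota 0 n).
Proof.
have n0 : (0 < n)%N by apply/card_gt0P; exists e1.
apply/hasP; exists n.-1; first by rewrite mem_iota add0n prednK ?leqnn.
by rewrite prednK //; apply: determined_run_full.
Qed.

Lemma tau_le x : (tau x <= n)%N.
Proof. by have := has_determined x; rewrite has_find size_iota. Qed.

Lemma tau_determined x w : agree (hist (run x (tau x)) x) w -> f w = f x.
Proof.
move: w; apply/determinedP; have := nth_find 0%N (has_determined x).
have := has_determined x; rewrite has_find size_iota => taun.
by rewrite nth_iota ?add0n.
Qed.

Lemma determined_agree x x' t : agree (hist (run x t) x) x' ->
  determined f e1 phi x' t = determined f e1 phi x t.
Proof.
move=> xx'; have runE := run_agree xx'; have histE := hist_agree xx'.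
apply/determinedP/determinedP; rewrite runE histE => fx w xw.
  by rewrite (fx w xw) (fx x (agree_hist_self _ _)).
by rewrite (fx w xw) (fx x' xx').
Qed.

Lemma tau_agree x x' t : (t <= n)%N -> agree (hist (run x t) x) x' ->
  (t < tau x')%N = (t < tau x)%N.
Proof.
move=> tn xx'; rewrite /Defs.tau !ltnS.
apply: (leq_find_eq (x0 := 0%N)) => i it.
rewrite nth_iota ?add0n ?(leq_trans it) //; apply: determined_agree.
by apply/agree_histP => s /(run_prefix it) /(agree_histP _ _ _ xx').
Qed.

(** * Telescoping along the run *)

Definition stage_dist x t := avg_dist (n - t) (run x t) x.

Definition stage_cov x t := avg_cond_cov (run x t) (next_edge (hist (run x t) x)).

Lemma stage_dist0 x : stage_dist x 0 = 0.
Proof.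
by apply: big1 => y _; rewrite coupled_dist_diag ?mulr0 //; apply: explored_run.
Qed.

Lemma stage_dist_tau x : stage_dist x (tau x) = \sum_y mu y * `|f x - f y|.
Proof.
rewrite /stage_dist /avg_dist (expect_tower_hist mu_ge0 (run x (tau x)) (fun y => `|f x - f y|)).
apply: eq_bigr => y _; have [->|y0] := eqVneq (mu y) 0; first by rewrite !mul0r.
congr (_ * _); apply: coupled_dist_determined; first exact: explored_run (tau_le x).
  exact: mass_hist_gt0.
exact: tau_determined.
Qed.

Definition excess x t :=
  if (t < tau x)%N then stage_dist x t.+1 - stage_dist x t - 2 * stage_cov x t else 0.

Lemma excess_local t x b w (e := next_edge (hist (run x t) x)) : (t < n)%N ->
  agree (rcons (hist (run x t) x) (e, b)) w ->
  excess w t = if (t < tau x)%N then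
    avg_dist (n - t.+1) (rcons (run x t) e) (upd x e b) - avg_dist (n - t) (run x t) x
    - 2 * avg_cond_cov (run x t) e else 0.
Proof.
move=> tn; rewrite agree_rcons => /andP[xw /eqP we].
rewrite /excess (tau_agree (ltnW tn) xw); case: ifP => // _.
have Sd : explored (run x t) (n - t) by apply/explored_run/ltnW.
have wx : {in run x t, w =1 x} by apply/agree_histP.
rewrite /stage_dist /stage_cov dt_runS (run_agree xw) (hist_agree xw) -/e.
rewrite (avg_dist_eq_in Sd wx); congr (_ - _ - _); apply: avg_dist_eq_in.
  by rewrite /e; apply: explored_rcons; rewrite subnSK.
move=> s; rewrite mem_rcons in_cons ffunE => /orP[/eqP ->|sS]; first by rewrite eqxx.
by case: eqP => [se|_]; [rewrite se | apply: wx].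
Qed.

Lemma expect_excess_le0 t : (t < n)%N -> \sum_x mu x * excess x t <= 0.
Proof.
move=> tn; rewrite (expect_tower mu_ge0 (C := fun x => hist (run x t) x)); first last.
- by move=> x; apply: agree_hist_self.
- by move=> x x' xx'; rewrite (run_agree xx'); apply: hist_agree.
apply: sumr_le0 => x _; apply: mulr_ge0_le0 => //; rewrite /cexp.
apply: mulr_le0_ge0; last by rewrite invr_ge0 mass_ge0.
set S := run x t; set e := next_edge (hist S x).
rewrite (wsum_split _ _ e) (wsum_const _ (fun w => @excess_local t x true w tn))
  (wsum_const _ (fun w => @excess_local t x false w tn)).
case: ifP => _; last by rewrite !mulr0 addr0.
have Sd : explored S (n - t.+1).+1 by rewrite subnSK //; apply/explored_run/ltnW.
have := avg_dist_step_le x Sd; rewrite subnSK // -/S -/e => step.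
rewrite !(mass_rcons_cprob mu_ge0) /bern; move: step.
set p := cprob _ e; set m := mass _; set Q := avg_dist (n - t) S x.
set A1 := avg_dist _ _ (upd x e true); set A0 := avg_dist _ _ (upd x e false).
set K := avg_cond_cov S e => step.
rewrite [leLHS](_ : _ = m * (p * A1 + (1 - p) * A0 - (Q + 2 * K))); last by ring.
by rewrite mulr_ge0_le0 ?mass_ge0 // subr_le0.
Qed.

Lemma sum_if_tau x (F : nat -> R) :
  \sum_(0 <= t < n) (if (t < tau x)%N then F t else 0) = \sum_(0 <= t < tau x) F t.
Proof.
rewrite (big_cat_nat (leq0n (tau x)) (tau_le x)) /= [X in _ + X]big_nat_cond.
rewrite [X in _ + X]big1 ?addr0 => [|t /andP[/andP[taut _] _]]; last by rewrite ltnNge taut.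
by apply: eq_big_nat => t /andP[_ ->].
Qed.

Lemma expect_abs_dist_le :
  \sum_x mu x * \sum_y mu y * `|f x - f y|
  <= 2 * \sum_x mu x * \sum_(0 <= t < n) (if (t < tau x)%N then stage_cov x t else 0).
Proof.
have telescope x : \sum_y mu y * `|f x - f y|
    = \sum_(0 <= t < n) (if (t < tau x)%N then stage_dist x t.+1 - stage_dist x t else 0).
  by rewrite sum_if_tau telescope_sumr // stage_dist0 subr0 stage_dist_tau.
under eq_bigr => x _ do rewrite telescope mulr_sumr.
rewrite mulr_sumr; under [leRHS]eq_bigr => x _ do rewrite !mulr_sumr.
rewrite exchange_big [leRHS]exchange_big /=; apply: ler_sum_nat => t /andP[_ tn].
rewrite -subr_le0 -sumrB; apply: le_trans (expect_excess_le0 tn); apply: ler_sum => x _.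
by rewrite /excess; case: ifP => _; rewrite ?mulr0 ?subr0 // [leRHS]mulrBr mulrCA.
Qed.

Lemma sum_next_edge x (c : E -> R) m :
  \sum_(0 <= t < m) c (next_edge (hist (run x t) x)) = \sum_(e <- run x m) c e.
Proof.
elim: m => [|m IH]; first by rewrite big_geq // big_nil.
by rewrite big_nat_recr // IH dt_runS big_rcons.
Qed.

Lemma sum_stage_cov_le x :
  \sum_(0 <= t < n) (if (t < tau x)%N then stage_cov x t else 0)
  <= \sum_(e <- run x (tau x)) covariance mu f (wcoord R e).
Proof.
rewrite sum_if_tau -sum_next_edge; apply: ler_sum_nat => t /andP[_ taut].
have tn : (t < n)%N := leq_trans taut (tau_le x).
have Sd : explored (run x t) (n - t.+1).+1 by rewrite subnSK //; apply/explored_run/ltnW.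
by apply: avg_cond_cov_le_covariance; [case/andP: Sd | apply: next_edge_notin Sd].
Qed.

Lemma expect_sum_run (c : E -> R) :
  \sum_x mu x * \sum_(e <- run x (tau x)) c e = \sum_e revealment mu f e1 phi e * c e.
Proof.
under [RHS]eq_bigr => e _ do rewrite /revealment /prob big_distrl /= big_mkcond.
rewrite exchange_big; apply: eq_bigr => x _ /=.
have uS : uniq (run x (tau x)) by case/andP: (explored_run x (tau_le x)).
by rewrite (big_uniq _ uS) big_distrr big_mkcond; apply: eq_bigr => e _; case: ifP.
Qed.

Lemma variance_le_revealment_cov :
  variance mu f <= \sum_e revealment mu f e1 phi e * covariance mu f (wcoord R e).
Proof.
rewrite -(ler_pM2l (ltr0Sn R 1)) -expect_sum_run.
apply: le_trans (variance_le_abs_dist mu_ge0 mu_sum1 f01) _.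
apply: le_trans expect_abs_dist_le _; apply: ler_wpM2l => //.
by apply: ler_sum => x _; apply/ler_wpM2l/sum_stage_cov_le.
Qed.

End CoupledExploration.

Theorem theorem1p1 (R : realFieldType) (E : finType) (f : conf E -> R)
  (hf01 : forall w, 0 <= f w <= 1) (hfinc : increasing f)
  (mu : conf E -> R) (hmu : is_prob mu) (hmono : monotonic mu)
  (e1 : E) (phi : seq (E * bool) -> E) (hT : dtree_valid e1 phi) :
  variance mu f <=
    \sum_(e : E) revealment mu f e1 phi e * covariance mu f (@wcoord R E e).
Proof.
case: hmu => mu_ge0 mu_sum1.
exact: variance_le_revealment_cov mu_ge0 hf01 hfinc hmono hT mu_sum1.
Qed.
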